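(* Let $n_0$ be a sufficiently large universal constant. If $n \ge n_0$ and $\beta = 8 n$, then $|\mathcal{G}_{2n,\beta}| \ge 2^{n^2/2}$.
   Context: Fix disjoint vertex sets $L,R$ with $|L|=|R|=n$ and a fixed perfect matching $M$ of directed edges from $L$ to $R$. $\mathcal{G}_{2n}$ is the set of all unweighted directed graphs on vertex set $L\cup R$ whose set of edges from $L$ to $R$ is exactly $M$, whose edges from $R$ to $L$ form an arbitrary subset of $R\times L$, and which have no other edges (so $|\mathcal{G}_{2n}|=2^{n^2}$). A directed graph (with unit weights) is $\beta$-balanced if it is strongly connected and for every $\varnothing\ne S\subsetneq V$ the number of edges leaving $S$ is at most $\beta$ times the number of edges entering $S$. $\mathcal{G}_{2n,\beta}\subseteq\mathcal{G}_{2n}$ is the subset of $\beta$-balanced graphs. *)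

From mathcomp Require Import all_boot all_fingroup.
Set Implicit Arguments. Unset Strict Implicit. Unset Printing Implicit Defensive.

Section DiGraph.
Variable T : finType.
Variable e : rel T.

Definition strongly_connected : bool := [forall u, forall v, connect e u v].

Definition out_deg (S : {set T}) : nat :=
  #|[set p : T * T | [&& e p.1 p.2, p.1 \in S & p.2 \notin S]]|.

Definition in_deg (S : {set T}) : nat :=
  #|[set p : T * T | [&& e p.1 p.2, p.1 \notin S & p.2 \in S]]|.

(* beta-balanced (unit weights) *)
Definition balanced (beta : nat) : bool :=
  strongly_connected &&
  [forall S : {set T}, ((S != set0) && (S != setT)) ==>
                       (out_deg S <= beta * in_deg S)].
End DiGraph.

(* Vertex set L \cup R with L = inl 'I_n, R = inr 'I_n. *)
Definition Vtx (n : nat) : finType := ('I_n + 'I_n)%type.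

(* The graph of G_{2n} determined by the perfect matching sigma
   (edges inl i -> inr (sigma i)) and the set B of R-to-L edges
   ((j, i) \in B  iff  edge inr j -> inl i). *)
Definition gedge (n : nat) (sigma : 'S_n) (B : {set 'I_n * 'I_n}) : rel (Vtx n) :=
  fun u v =>
    match u, v with
    | inl i, inr j => sigma i == j
    | inr j, inl i => (j, i) \in B
    | _, _ => false
    end.

Definition count_balanced (n : nat) (sigma : 'S_n) (beta : nat) : nat :=
  #|[set B : {set 'I_n * 'I_n} | balanced (gedge sigma B) beta]|.

From mathcomp Require Import all_boot all_fingroup zify.
Set Implicit Arguments. Unset Strict Implicit. Unset Printing Implicit Defensive.

(* Colour L by lower and upper half of the indices and give each vertex of R
   the colour of its partner in M.  Forcing every R-to-L edge between vertices
   of different colours leaves the same-coloured pairs, at least n^2/2 of them,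
   free.  Each resulting graph is 8n-balanced: matching edges and forced edges
   enter every proper cut (at least one does, as both colours occur), and each
   edge leaving the cut can be charged to an entering one with at most 8n
   charges apiece, because each colour class holds at least a third of the
   vertices. *)

Lemma leq_card_preimset (aT rT : finType) (f : aT -> rT) (A : {set rT}) :
  injective f -> #|f @^-1: A| <= #|A|.
Proof.
move=> f_inj; rewrite -(card_imset _ f_inj).
by apply/subset_leq_card/subsetP => _ /imsetP[x + ->]; rewrite inE.
Qed.

(* A cut S is described by SL, the indices of its L-vertices, and SR, the
   indices whose R-partner lies in S; a pair (a, b) stands for the R-to-L edge
   from the partner of a to b.  [inflow] counts the matching and forced edges
   entering S, [outflow] bounds the number of edges leaving it. *)
Section ColouredCut.
Variables (T : finType) (c : T -> bool).
Hypothesis colour_class_small : forall h, 3 * #|[set x | c x == h]| <= 2 * #|T|.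
Variables SL SR : {set T}.
Hypothesis SLR_ne0 : (SL != set0) || (SR != set0).
Hypothesis SLR_neT : (SL != setT) || (SR != setT).

Definition cross_in :=
  [set p : T * T | [&& p.1 \notin SR, p.2 \in SL & c p.1 != c p.2]].
Definition inflow := #|SR :\: SL| + #|cross_in|.
Definition outflow := #|SL :\: SR| + #|SR| * #|~: SL|.

Lemma card_colour_class_le h :
  #|[set x | c x == h]| <= 2 * #|[set x | c x != h]|.
Proof.
have := cardsC [set x | c x == h]; have := colour_class_small h.
have -> : ~: [set x | c x == h] = [set x | c x != h] by apply/setP => x; rewrite !inE.
lia.
Qed.

Lemma inflow_gt0 : 0 < inflow.
Proof.
rewrite /inflow lt0n addn_eq0 !cards_eq0 setD_eq0.
apply/negP => /andP[SR_SL /eqP cross0].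
have same_colour a b : a \notin SR -> b \in SL -> c a = c b.
  move=> aNR bL; apply/eqP/negPn/negP => ab.
  have : (a, b) \in cross_in by rewrite !inE /= aNR bL.
  by rewrite cross0 inE.
have [b bL] : exists b, b \in SL.
  by case/orP: SLR_ne0 => /set0Pn[x x_in]; exists x => //; apply: (subsetP SR_SL).
have [a aNR] : exists a, a \notin SR.
  case/orP: SLR_neT; rewrite -subTset => /subsetPn[x _ x_out]; exists x => //.
  by apply: contra x_out; apply: (subsetP SR_SL).
have [d db] : exists d, c d != c b.
  have b_class : 0 < #|[set x | c x == c b]| by apply/card_gt0P; exists b; rewrite inE.
  have /card_gt0P[d] : 0 < #|[set x | c x != c b]|.
    by have := card_colour_class_le (c b); lia.
  by rewrite inE; exists d.
have [dR | dNR] := boolP (d \in SR).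
  have dL := subsetP SR_SL d dR.
  by move: db; rewrite -(same_colour a d aNR dL) (same_colour a b) ?eqxx.
by rewrite (same_colour d b) ?eqxx in db.
Qed.

Definition same_colour_block h := [set p : T * T |
  [&& p.1 \in SR :&: SL, p.2 \notin SR :|: SL, c p.1 == h & c p.2 == h]].

(* If SL or the complement of SR meets the other colour, each pair of the block
   gives a forced entering edge through a fixed endpoint; otherwise the whole
   other colour class lies in SR :\: SL. *)
Lemma card_same_colour_block h : #|same_colour_block h| <= 2 * #|T| * inflow.
Proof.
have fibre_le (f : T -> T * T) : injective f -> #|f @^-1: cross_in| <= inflow.
  by move=> f_inj; apply: leq_trans (leq_card_preimset _ f_inj) (leq_addl _ _).
have [/existsP[d /andP[dL dh]] | /existsPn noL] :=
  boolP [exists d, (d \in SL) && (c d != h)].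
  have pair_inj : injective (fun b : T => (b, d)) by move=> x y /= [->].
  have : same_colour_block h \subset setX [set: T] ((fun b => (b, d)) @^-1: cross_in).
    apply/subsetP => -[a b]; rewrite !inE /= => /and4P[_ /norP[bNR _] _ /eqP bh].
    by rewrite bNR dL bh eq_sym.
  move/subset_leq_card; rewrite cardsX cardsT.
  by have := fibre_le _ pair_inj; nia.
have [/existsP[e /andP[eNR eh]] | /existsPn noR] :=
  boolP [exists e, (e \notin SR) && (c e != h)].
  have pair_inj : injective (fun a : T => (e, a)) by move=> x y /= [->].
  have : same_colour_block h \subset setX ((fun a => (e, a)) @^-1: cross_in) [set: T].
    apply/subsetP => -[a b]; rewrite !inE /= => /and4P[/andP[_ aL] _ /eqP ah _].
    by rewrite eNR aL ah andbT.
  move/subset_leq_card; rewrite cardsX cardsT.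
  by have := fibre_le _ pair_inj; nia.
have other_sub : [set x | c x != h] \subset SR :\: SL.
  apply/subsetP => x; rewrite !inE => xh.
  by move: (noL x) (noR x); rewrite xh !andbT negbK => -> ->.
have : same_colour_block h \subset setX [set x | c x == h] [set x | c x == h].
  by apply/subsetP => -[a b]; rewrite !inE /= => /and4P[_ _ -> ->].
move/subset_leq_card; rewrite cardsX.
have := card_colour_class_le h; have := subset_leq_card other_sub.
have : #|[set x | c x == h]| <= #|T| := max_card _.
have : #|SR :\: SL| <= inflow := leq_addr _ _.
nia.
Qed.

Lemma outflow_le : outflow <= 8 * #|T| * inflow.
Proof.
have i_gt0 := inflow_gt0.
have n_gt0 : 0 < #|T|.
  by apply/card_gt0P; case/orP: SLR_ne0 => /set0Pn[x _]; exists x.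
pose swap (p : T * T) := (p.2, p.1).
have swap_inj : injective swap by move=> [? ?] [? ?] [-> ->].
have cover : setX SR (~: SL) \subset setX (SR :\: SL) [set: T]
    :|: setX [set: T] (SR :\: SL) :|: swap @^-1: cross_in
    :|: same_colour_block true :|: same_colour_block false.
  apply/subsetP => -[a b]; rewrite !inE /= => /andP[-> /negbTE->].
  by case: (a \in SL); case: (b \in SR); case: (c a); case: (c b).
have O2_le : #|setX SR (~: SL)| <= #|SR :\: SL| * #|T| + #|T| * #|SR :\: SL|
    + #|cross_in| + #|same_colour_block true| + #|same_colour_block false|.
  apply: (leq_trans (subset_leq_card cover)).
  apply: (leq_trans (leq_card_setU _ _)); apply: leq_add => //.
  apply: (leq_trans (leq_card_setU _ _)); apply: leq_add => //.
  apply: (leq_trans (leq_card_setU _ _)); apply: leq_add; last exact: leq_card_preimset.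
  by apply: (leq_trans (leq_card_setU _ _)); rewrite !cardsX cardsT.
move: O2_le; rewrite /outflow -cardsX.
have := card_same_colour_block true; have := card_same_colour_block false.
have : #|SL :\: SR| <= #|T| := max_card _.
have : #|SR :\: SL| <= inflow := leq_addr _ _.
have : #|cross_in| <= inflow := leq_addl _ _.
nia.
Qed.
End ColouredCut.

Lemma strongly_connected_of_in_deg (T : finType) (e : rel T) :
  (forall S : {set T}, S != set0 -> S != setT -> 0 < in_deg e S) ->
  strongly_connected e.
Proof.
move=> in_deg_gt0; apply/forallP => u; apply/forallP => v.
pose S := [set w | connect e w v].
have [|uNS] := boolP (u \in S); first by rewrite inE.
have S_ne0 : S != set0 by apply/set0Pn; exists v; rewrite inE connect0.
have S_neT : S != setT by apply: contraNneq uNS => ->; rewrite inE.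
have /card_gt0P[[x y]] := in_deg_gt0 S S_ne0 S_neT.
rewrite !inE /= => /and3P[exy /negP xNS yv].
by case: xNS; apply: connect_trans (connect1 exy) yv.
Qed.

Lemma card_supsets (T : finType) (F : {set T}) :
  #|[set B : {set T} | F \subset B]| = 2 ^ #|~: F|.
Proof.
have -> : [set B : {set T} | F \subset B] = @setC T @^-1: powerset (~: F).
  by apply/setP => B; rewrite !inE setCS.
by rewrite card_preimset ?card_powerset //; apply: setC_inj.
Qed.

Lemma card_same_colour_pairs (T : finType) (c : T -> bool) :
  #|T| ^ 2 <= 2 * #|[set p : T * T | c p.1 == c p.2]|.
Proof.
pose P := [set x | c x].
have -> : [set p : T * T | c p.1 == c p.2] = setX P P :|: setX (~: P) (~: P).
  by apply/setP => -[x y]; rewrite !inE /=; case: (c x); case: (c y).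
rewrite cardsU.
have -> : setX P P :&: setX (~: P) (~: P) = set0.
  by apply/setP => -[x y]; rewrite !inE /=; case: (c x); case: (c y).
rewrite cards0 subn0 !cardsX -(cardsC P) sqrnD !mulnn.
have := (nat_Cauchy #|P| #|~: P|).1; lia.
Qed.

Section MatchingGraph.
Variables (n : nat) (sigma : 'S_n) (c : 'I_n -> bool).

Definition forced_edges : {set 'I_n * 'I_n} :=
  [set p | c ((sigma^-1)%g p.1) != c p.2].

Lemma card_unforced_edges : n ^ 2 <= 2 * #|~: forced_edges|.
Proof.
pose f (p : 'I_n * 'I_n) := ((sigma^-1)%g p.1, p.2).
have f_inj : injective f by move=> [? ?] [? ?] [/perm_inj -> ->].
have -> : ~: forced_edges = f @^-1: [set p | c p.1 == c p.2].
  by apply/setP => p; rewrite !inE negbK.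
rewrite card_preimset // -[X in X ^ 2]card_ord; exact: card_same_colour_pairs.
Qed.

Definition match_edge (i : 'I_n) : Vtx n * Vtx n := (inl i, inr (sigma i)).
Definition back_edge (p : 'I_n * 'I_n) : Vtx n * Vtx n := (inr (sigma p.1), inl p.2).

Variables (B : {set 'I_n * 'I_n}) (S : {set Vtx n}).

Definition cut_L := [set i | inl i \in S].
Definition cut_R := [set i | inr (sigma i) \in S].

Lemma in_deg_ge :
  forced_edges \subset B -> inflow c cut_L cut_R <= in_deg (gedge sigma B) S.
Proof.
move=> forcedB.
have match_inj : injective match_edge by move=> i j [].
have back_inj : injective back_edge by move=> [? ?] [? ?] [/perm_inj -> ->].
have : [disjoint match_edge @: (cut_R :\: cut_L) & back_edge @: cross_in c cut_L cut_R].
  by rewrite -setI_eq0; apply/set0Pn => -[_ /setIP[/imsetP[i _ ->] /imsetP[p _ []]]].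
rewrite /inflow -(card_imset _ match_inj) -(card_imset _ back_inj).
rewrite -(leq_card_setU _ _).2 => /eqP <-.
apply/subset_leq_card/subsetP => v /setUP[] /imsetP[x]; rewrite !inE /=.
  by move=> /andP[iNL iR] ->; rewrite /= eqxx iNL iR.
move=> /and3P[aNR bL ab] ->; rewrite /= bL andbT; apply/andP; split=> //.
by apply: (subsetP forcedB); rewrite inE permK.
Qed.

Lemma out_deg_le : out_deg (gedge sigma B) S <= outflow cut_L cut_R.
Proof.
apply: (@leq_trans
  #|match_edge @: (cut_L :\: cut_R) :|: back_edge @: setX cut_R (~: cut_L)|).
  apply/subset_leq_card/subsetP => -[[i|j] [i'|j']]; rewrite !inE //=.
    move=> /and3P[/eqP <- iS jS]; apply/orP; left.
    by apply/imsetP; exists i; rewrite // !inE iS jS.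
  move=> /and3P[ji jS iS]; apply/orP; right.
  apply/imsetP; exists ((sigma^-1)%g j, i'); last by rewrite /back_edge /= permKV.
  by rewrite !inE /= permKV jS.
rewrite /outflow -cardsX; apply: leq_trans (leq_card_setU _ _) _.
by apply: leq_add; apply: leq_imset_card.
Qed.

Lemma cut_ne0 : S != set0 -> (cut_L != set0) || (cut_R != set0).
Proof.
case/set0Pn => -[i|j] vS; apply/orP; [left; apply/set0Pn; exists i|right].
  by rewrite inE.
by apply/set0Pn; exists ((sigma^-1)%g j); rewrite inE permKV.
Qed.

Lemma cut_neT : S != setT -> (cut_L != setT) || (cut_R != setT).
Proof.
rewrite -subTset => /subsetPn[[i|j] _ vNS]; apply/orP; [left|right];
  rewrite -subTset; apply/subsetPn.
  by exists i; rewrite ?inE.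
by exists ((sigma^-1)%g j); rewrite ?inE ?permKV.
Qed.
End MatchingGraph.

Section BalancedColouring.
Variables (n : nat) (sigma : 'S_n) (c : 'I_n -> bool).
Hypothesis colour_class_small : forall h, 3 * #|[set i | c i == h]| <= 2 * #|'I_n|.

Lemma balanced_of_forced_sub (B : {set 'I_n * 'I_n}) :
  forced_edges sigma c \subset B -> balanced (gedge sigma B) (8 * n).
Proof.
move=> forcedB; apply/andP; split.
  apply: strongly_connected_of_in_deg => S S_ne0 S_neT.
  have := inflow_gt0 colour_class_small
    (cut_ne0 sigma S_ne0) (cut_neT sigma S_neT).
  by move/leq_trans; apply; apply: in_deg_ge.
apply/forallP => S; apply/implyP => /andP[S_ne0 S_neT].
apply: (leq_trans (out_deg_le sigma B S)).
apply: (leq_trans (outflow_le colour_class_small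
  (cut_ne0 sigma S_ne0) (cut_neT sigma S_neT))).
by rewrite card_ord leq_mul2l in_deg_ge ?orbT.
Qed.

Lemma count_balanced_ge :
  2 ^ #|~: forced_edges sigma c| <= count_balanced sigma (8 * n).
Proof.
rewrite -card_supsets; apply/subset_leq_card/subsetP => B; rewrite !inE.
exact: balanced_of_forced_sub.
Qed.
End BalancedColouring.

Lemma card_ord_lt n k : k <= n -> #|[set i : 'I_n | i < k]| = k.
Proof.
move=> le_kn; have -> : [set i : 'I_n | i < k] = widen_ord le_kn @: [set: 'I_k].
  apply/setP => i; rewrite inE.
  apply/idP/imsetP => [lt_ik | [j _ ->]]; last exact: (ltn_ord j).
  by exists (Ordinal lt_ik) => //; apply: val_inj.
by rewrite card_imset ?cardsT ?card_ord // => i j /(congr1 val) /= /val_inj.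
Qed.

Lemma lower_half_class_small n : 1 < n ->
  forall h, 3 * #|[set i : 'I_n | (i < n %/ 2) == h]| <= 2 * #|'I_n|.
Proof.
move=> n_gt1 h; pose lo := [set i : 'I_n | i < n %/ 2].
have card_lo : #|lo| = n %/ 2 := card_ord_lt (leq_div n 2).
have card_hi : #|~: lo| = n - n %/ 2.
  by have := cardsC lo; rewrite card_lo card_ord; lia.
rewrite card_ord; case: h.
  have -> : [set i : 'I_n | (i < n %/ 2) == true] = lo.
    by apply/setP => i; rewrite !inE eqb_id.
  rewrite card_lo; lia.
have -> : [set i : 'I_n | (i < n %/ 2) == false] = ~: lo.
  by apply/setP => i; rewrite !inE eqbF_neg.
rewrite card_hi; lia.
Qed.

Theorem lemma5 :
  exists n0 : nat, forall n : nat, n0 <= n ->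
    forall sigma : 'S_n, 2 ^ (n ^ 2) <= (count_balanced sigma (8 * n)) ^ 2.
Proof.
exists 2 => n n_ge2 sigma.
pose c (i : 'I_n) := i < n %/ 2.
have count_ge : 2 ^ #|~: forced_edges sigma c| <= count_balanced sigma (8 * n).
  exact: count_balanced_ge (lower_half_class_small n_ge2).
have free_ge : n ^ 2 <= 2 * #|~: forced_edges sigma c| := card_unforced_edges sigma c.
apply: leq_trans (leq_pexp2l _ free_ge) _ => //.
by rewrite mulnC expnM leq_exp2r.
Qed.
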